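(* Let $\vec{\mathcal G}=([n],E)$ be a directed graph with $m=|E|$ edges in which every vertex has at least one outgoing edge and which has at least one directed cycle. For weights $r\in\mathbb R^m$ let $\lambda(r)$ denote the minimum, over all directed cycles $C$ of $\vec{\mathcal G}$, of the mean weight of $C$. Then for every edge $(i,j)\in E$ and every $r_{-ij}\in\mathbb R^{m-1}$, the function $\mathbb R\ni x\mapsto \lambda(x,r_{-ij})$ is continuous, piecewise affine, and has at most $n$ break points.
   Context: The mean weight of a directed cycle is the sum of the weights of its edges divided by its number of edges. For $r\in\mathbb R^m$ and an edge $(i,j)$, $r_{-ij}\in\mathbb R^{m-1}$ is $r$ with the $ij$-th coordinate removed, and $(x,r_{-ij})\in\mathbb R^m$ is $r$ with the $ij$-th coordinate replaced by $x$. *)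

From HB Require Import structures.
From mathcomp Require Import all_boot all_order all_algebra.
From mathcomp Require Import all_classical all_reals all_analysis.
Set Implicit Arguments. Unset Strict Implicit. Unset Printing Implicit Defensive.
Import Order.TTheory GRing.Theory Num.Theory.
Import numFieldNormedType.Exports.
Local Open Scope classical_set_scope.
Local Open Scope ring_scope.

(* A directed graph on vertex set [n] = 'I_n is given by its edge set
   E : {set 'I_n * 'I_n}.  Edge weights are a function r on pairs; only
   the values r e for e \in E matter. *)

Definition dcycle (n : nat) (E : {set 'I_n * 'I_n}) (c : seq 'I_n) : Prop :=
  [/\ c != [::], uniq c & cycle (fun u v => (u, v) \in E) c].

Definition cycle_edges (n : nat) (c : seq 'I_n) : seq ('I_n * 'I_n) :=
  zip c (rot 1 c).

Definition cycle_mean (R : realType) (n : nat) (r : 'I_n * 'I_n -> R)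
  (c : seq 'I_n) : R :=
  (\sum_(e <- cycle_edges c) r e) / (size c)%:R.

(* lambda(r): minimum over all directed cycles of the mean weight
   (the set is finite and nonempty under the hypotheses, so inf = min) *)
Definition min_cycle_mean (R : realType) (n : nat) (E : {set 'I_n * 'I_n})
  (r : 'I_n * 'I_n -> R) : R :=
  inf [set cycle_mean r c | c in dcycle E].

Definition replace_coord (R : realType) (n : nat) (r : 'I_n * 'I_n -> R)
  (e0 : 'I_n * 'I_n) (x : R) : 'I_n * 'I_n -> R :=
  fun e => if e == e0 then x else r e.

(* f : R -> R is piecewise affine with at most N break points:
   there are points b_1 < ... < b_k, k <= N, such that f is affine on each of
   (-oo, b_1], [b_1, b_2], ..., [b_k, +oo). *)
Definition piecewise_affine_at_most (R : realType) (N : nat) (f : R -> R) : Prop :=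
  exists b : seq R,
    [/\ (size b <= N)%N, sorted <%R b &
      forall k : nat, (k <= size b)%N ->
        exists a c : R, forall x : R,
          ((k == 0)%N || (nth 0 b k.-1 <= x)) ->
          ((k == size b) || (x <= nth 0 b k)) ->
          f x = a * x + c].

From HB Require Import structures.
From mathcomp Require Import all_boot all_order all_algebra.
From mathcomp Require Import all_classical all_reals all_analysis.
From mathcomp Require Import ring.
Import Order.TTheory GRing.Theory Num.Theory.
Import numFieldNormedType.Exports.
Set Implicit Arguments. Unset Strict Implicit. Unset Printing Implicit Defensive.
Local Open Scope classical_set_scope.
Local Open Scope ring_scope.

(* For fixed r_{-ij}, every cycle mean is an affine function of x whose slope is
   0 or 1/|C| (the edge ij occurs at most once in a simple cycle), so lambda is the
   lower envelope of finitely many lines with at most n + 1 distinct slopes.  Such an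
   envelope is continuous, and it is piecewise affine with fewer breaks than slopes:
   the lines of largest slope win on a half-line (-oo, beta], and to the right of
   beta the envelope of the remaining lines takes over, which has one slope less. *)

Lemma exists_argmin_seq (d : Order.disp_t) (X : orderType d) (T : eqType) (F : T -> X)
    (s : seq T) :
  s != [::] -> exists2 x, x \in s & forall y, y \in s -> (F x <= F y)%O.
Proof.
elim: s => // a s IH _; have [->|s0] := eqVneq s [::].
  by exists a; rewrite ?mem_seq1 // => y; rewrite mem_seq1 => /eqP->.
have [x xs xmin] := IH s0; have [Fax|Fxa] := leP (F a) (F x).
  exists a; first exact: mem_head.
  by move=> y; rewrite inE => /orP[/eqP->//|/xmin]; exact: le_trans.
exists x; first by rewrite inE xs orbT.
by move=> y; rewrite inE => /orP[/eqP->|/xmin//]; exact: ltW.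
Qed.

Section LowerEnvelope.
Variable R : realType.
Implicit Types (p q : R * R) (P Q : seq (R * R)) (x : R).

Definition line p x : R := p.1 * x + p.2.

(* The first line serves as neutral element, so for nonempty [P] this is the
   pointwise minimum of its lines. *)
Definition envelope P x : R := \big[Num.min/line (head (0, 0) P) x]_(p <- P) line p x.

Lemma envelope_le P p x : p \in P -> envelope P x <= line p x.
Proof.
rewrite /envelope; move: (line (head _ P) x) => d; elim: P => // p' P IH.
rewrite inE big_cons ge_min => /orP[/eqP->|/IH->]; by rewrite ?lexx ?orbT.
Qed.

Lemma envelope_attained P x : P != [::] -> exists2 p, p \in P & envelope P x = line p x.
Proof.
rewrite /envelope; case: P => // p0 P _ /=; rewrite big_cons; set d := line p0 x.
suff [p pP ->] : exists2 p, p \in p0 :: P & \big[Num.min/d]_(p' <- P) line p' x = line p x.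
  by case: leP => _; [exists p0; rewrite ?mem_head | exists p].
elim: P => [|p P [p' p'P IH]]; first by exists p0; rewrite ?big_nil ?mem_head.
rewrite big_cons IH; case: leP => _.
  by exists p; rewrite // !inE eqxx orbT.
by exists p'; rewrite // !inE in p'P *; case/orP: p'P => ->; rewrite ?orbT.
Qed.

Lemma envelope_eq P x (v : R) :
  (exists2 p, p \in P & v = line p x) -> (forall p, p \in P -> v <= line p x) ->
  envelope P x = v.
Proof.
move=> [p pP ->] vle; apply/le_anti; rewrite envelope_le //=.
have P0 : P != [::] by apply: contraTneq pP => ->.
by have [q qP ->] := envelope_attained x P0; exact: vle.
Qed.

Lemma line_continuous p : continuous (line p).
Proof. by move=> x; apply: cvgD; [apply: cvgM; [exact: cvg_cst | exact: cvg_id] | exact: cvg_cst]. Qed.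

Lemma envelope_continuous P : continuous (envelope P).
Proof.
rewrite /envelope; move: (head _ P) => d.
elim: P => [|p P IH]; first by under eq_fun do rewrite big_nil; exact: line_continuous.
under eq_fun do rewrite big_cons.
exact: (min_fun_continuous (@line_continuous p) IH).
Qed.

(* [None] stands for an infinite endpoint. *)
Definition inside (lo hi : option R) x : bool :=
  (if lo is Some l then l <= x else true) && (if hi is Some h then x <= h else true).

Definition strictly_inside (lo hi : option R) x : bool :=
  (if lo is Some l then l < x else true) && (if hi is Some h then x < h else true).

Definition affine_on (f : R -> R) (lo hi : option R) : Prop :=
  exists a c : R, forall x, inside lo hi x -> f x = a * x + c.

Definition affine_off (B : seq R) (f : R -> R) : Prop :=
  forall lo hi, (forall b, b \in B -> ~~ strictly_inside lo hi b) -> affine_on f lo hi.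

Lemma inside_side lo hi b : ~~ strictly_inside lo hi b ->
  (forall x, inside lo hi x -> x <= b) \/ (forall x, inside lo hi x -> b <= x).
Proof.
case: lo hi => [l|] [h|]; rewrite /strictly_inside /inside //= ?andbT -?leNgt.
- rewrite negb_and -!leNgt => /orP[bl|hb].
    by right => x /andP[lx _]; exact: le_trans bl lx.
  by left => x /andP[_ xh]; exact: le_trans xh hb.
- by move=> bl; right => x /andP[lx _]; exact: le_trans bl lx.
- by move=> hb; left => x xh; exact: le_trans xh hb.
Qed.

Definition cross p q : R := (q.2 - p.2) / (p.1 - q.1).

Lemma line_sub_cross p q x :
  p.1 != q.1 -> line p x - line q x = (p.1 - q.1) * (x - cross p q).
Proof. by rewrite -subr_eq0 => pq; rewrite /line /cross; field. Qed.

Lemma le_line_cross p q x : q.1 < p.1 -> (line p x <= line q x) = (x <= cross p q).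
Proof.
move=> qp; rewrite -subr_le0 line_sub_cross ?gt_eqF //.
by rewrite pmulr_rle0 ?subr_gt0 // subr_le0.
Qed.

Lemma ge_line_cross p q x : q.1 < p.1 -> (line q x <= line p x) = (cross p q <= x).
Proof.
move=> qp; rewrite -subr_ge0 line_sub_cross ?gt_eqF //.
by rewrite pmulr_rge0 ?subr_gt0 // subr_ge0.
Qed.

Lemma exists_top_line P : P != [::] ->
  exists2 g, g \in P & forall p, p \in P -> p.1 < g.1 \/ (p.1 = g.1 /\ g.2 <= p.2).
Proof.
move=> P0; have [top topP topmax] := exists_argmin_seq (fun p => - p.1) P0.
have topG : top \in [seq p <- P | p.1 == top.1] by rewrite mem_filter eqxx.
have G0 : [seq p <- P | p.1 == top.1] != [::] by apply: contraTneq topG => ->.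
have [g] := exists_argmin_seq snd G0; rewrite mem_filter => /andP[/eqP gs gP] gmin.
exists g => // p pP; rewrite gs; case: (eqVneq p.1 top.1) => [ps|ps].
  by right; split=> //; apply: gmin; rewrite mem_filter ps eqxx.
by left; rewrite lt_neqAle ps -lerN2 topmax.
Qed.

Section TopLine.
Variables (P : seq (R * R)) (g : R * R).
Hypothesis gP : g \in P.
Hypothesis g_top : forall p, p \in P -> p.1 < g.1 \/ (p.1 = g.1 /\ g.2 <= p.2).

Let Q := [seq p <- P | p.1 < g.1].

Lemma line_top_le p x : p \in P -> p \notin Q -> line g x <= line p x.
Proof.
move=> pP pQ; have [pg|[ps gp]] := g_top pP; first by move: pQ; rewrite mem_filter pg pP.
by rewrite /line ps lerD2l.
Qed.

Lemma envelope_top x : Q = [::] -> envelope P x = line g x.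
Proof.
move=> Q0; apply: envelope_eq => [|p pP]; first by exists g.
by apply: line_top_le; rewrite // Q0.
Qed.

Lemma envelope_split : Q != [::] -> exists beta,
  (forall x, x <= beta -> envelope P x = line g x) /\
  (forall x, beta <= x -> envelope P x = envelope Q x).
Proof.
move=> Q0; have slope_Q q : q \in Q -> q.1 < g.1 by rewrite mem_filter => /andP[].
have [q0 q0Q q0min] := exists_argmin_seq (cross g) Q0.
exists (cross g q0); split => x bx.
  apply: envelope_eq => [|p pP]; first by exists g.
  have [pQ|pQ] := boolP (p \in Q); last exact: line_top_le.
  by rewrite le_line_cross ?slope_Q //; exact: le_trans bx (q0min _ pQ).
apply: envelope_eq => [|p pP].
  have [q qQ ->] := envelope_attained x Q0.
  by exists q; rewrite // mem_filter in qQ; case/andP: qQ.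
have [pQ|pQ] := boolP (p \in Q); first exact: envelope_le.
apply: le_trans (envelope_le x q0Q) (le_trans _ (line_top_le x pP pQ)).
by rewrite ge_line_cross ?slope_Q.
Qed.

End TopLine.

Lemma envelope_affine_off (S : seq R) P :
  uniq S -> P != [::] -> {subset map fst P <= S} ->
  exists2 B : seq R, (size B < size S)%N & affine_off B (envelope P).
Proof.
have [m] := ubnP (size S); elim: m S P => // m IH S P Sm Su P0 PS.
have [g gP g_top] := exists_top_line P0.
have gS : g.1 \in S by apply: PS; exact: map_f.
have Spos : (0 < size S)%N by rewrite lt0n size_eq0; apply: contraTneq gS => ->.
set Q := [seq p <- P | p.1 < g.1].
have [Q0|Q0] := eqVneq Q [::].
  by exists [::] => // lo hi _; exists g.1, g.2 => x _; exact: envelope_top.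
have [beta [env_left env_right]] := envelope_split gP g_top Q0.
have [||BQ BQsize BQaff] := IH (rem g.1 S) Q _ (rem_uniq _ Su) Q0.
- by rewrite size_rem // -ltnS prednK.
- move=> _ /mapP[q qQ ->]; move: qQ; rewrite mem_filter => /andP[qg qP].
  by apply: rem_mem; [rewrite lt_eqF | apply: PS; exact: map_f].
exists (beta :: BQ); first by move: BQsize; rewrite /= size_rem // -ltnS prednK.
move=> lo hi avoid.
have [below|above] := inside_side (avoid beta (mem_head _ _)).
  by exists g.1, g.2 => x /below/env_left.
have [|a [c ac]] := BQaff lo hi; first by move=> b bB; apply: avoid; rewrite inE bB orbT.
by exists a, c => x xI; rewrite env_right ?ac //; exact: above.
Qed.

End LowerEnvelope.

Lemma piecewise_affine_at_most_of_affine_off (R : realType) (N : nat) (B : seq R) (f : R -> R) :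
  (size B <= N)%N -> affine_off B f -> piecewise_affine_at_most N f.
Proof.
move=> BN fB; set b := sort <=%R (undup B).
have b_le : sorted <=%R b by apply: sort_sorted; exact: le_total.
have b_lt : sorted <%R b by rewrite lt_sorted_uniq_le sort_uniq undup_uniq.
have b_mono k l : (k <= l < size b)%N -> nth 0 b k <= nth 0 b l.
  by case/andP=> kl lb; apply: (sorted_leq_nth le_trans lexx) => //; rewrite inE (leq_ltn_trans kl).
exists b; split => //; first by rewrite size_sort (leq_trans (size_undup B)).
move=> k kb.
pose lo := if k == 0%N then None else Some (nth 0 b k.-1).
pose hi := if k == size b then None else Some (nth 0 b k).
have [|a [c ac]] := fB lo hi.
  move=> x; rewrite -(mem_undup B) -(mem_sort <=%R) -/b => xb.
  rewrite -(nth_index 0 xb) /strictly_inside /lo /hi.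
  have := index_mem x b; rewrite xb; move: (index x b) => l lb.
  have [lk|kl] := ltnP l k.
    rewrite gtn_eqF ?(leq_ltn_trans _ lk) //= negb_and -leNgt b_mono //.
    have k0 : (0 < k)%N by apply: leq_ltn_trans lk.
    by apply/andP; split; rewrite -ltnS prednK.
  by rewrite (ltn_eqF (leq_ltn_trans kl lb)) negb_and -leNgt b_mono ?kl ?orbT.
exists a, c => x lox xhi; apply: ac; rewrite /inside /lo /hi.
by case: (k == 0%N) lox; case: (k == size b) xhi => //= xh lx; rewrite ?xh ?lx.
Qed.

Lemma size_uniq_ord (n : nat) (c : seq 'I_n) : uniq c -> (size c <= n)%N.
Proof. by move=> cu; rewrite -(card_uniqP cu) -[X in (_ <= X)%N]card_ord max_card. Qed.

Lemma finite_dcycles (n : nat) (E : {set 'I_n * 'I_n}) :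
  exists L : seq (seq 'I_n), forall c, c \in L <-> dcycle E c.
Proof.
pose seqs := flatten [seq [seq tval t | t <- enum {: k.-tuple 'I_n}] | k <- iota 0 n.+1].
exists [seq c <- seqs | [&& c != [::], uniq c & cycle (fun u v => (u, v) \in E) c]] => c.
rewrite mem_filter; split=> [/andP[/and3P[]]|[c0 cu cE]]; first by split.
rewrite c0 cu cE /=; apply/flattenP; exists [seq tval t | t <- enum {: (size c).-tuple 'I_n}].
  by apply/mapP; exists (size c) => //; rewrite mem_iota /= ltnS size_uniq_ord.
by apply/mapP; exists (in_tuple c); rewrite ?mem_enum.
Qed.

Lemma cycle_edges_uniq (n : nat) (c : seq 'I_n) : uniq c -> uniq (cycle_edges c).
Proof.
move=> cu; apply: (@map_uniq _ _ fst).
by rewrite /cycle_edges -/(unzip1 _) unzip1_zip // size_rot.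
Qed.

Lemma big_replace_coord (R : realType) (n : nat) (r : 'I_n * 'I_n -> R) e0 x
    (s : seq ('I_n * 'I_n)) :
  \sum_(e <- s) replace_coord r e0 x e = x * (count_mem e0 s)%:R + \sum_(e <- s | e != e0) r e.
Proof.
elim: s => [|e s IH]; first by rewrite !big_nil mulr0 addr0.
rewrite !big_cons IH /replace_coord /=; case: (eqVneq e e0) => [->|_] /=.
  by rewrite add1n -addn1 natrD; ring.
by rewrite add0n; ring.
Qed.

Definition cycle_line (R : realType) (n : nat) (r : 'I_n * 'I_n -> R) (e0 : 'I_n * 'I_n)
    (c : seq 'I_n) : R * R :=
  ((count_mem e0 (cycle_edges c))%:R / (size c)%:R,
   (\sum_(e <- cycle_edges c | e != e0) r e) / (size c)%:R).

Lemma cycle_mean_replace (R : realType) (n : nat) (r : 'I_n * 'I_n -> R) e0 x c :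
  cycle_mean (replace_coord r e0 x) c = line (cycle_line r e0 c) x.
Proof. by rewrite /cycle_mean big_replace_coord /line /=; ring. Qed.

Lemma dcycle_slope (R : realType) (n : nat) (E : {set 'I_n * 'I_n}) r e0 c :
  dcycle E c -> (cycle_line r e0 c).1 \in (0 : R) :: [seq (k.+1)%:R^-1 | k <- iota 0 n].
Proof.
case=> c0 cu _; rewrite /= count_uniq_mem ?cycle_edges_uniq //.
case: (e0 \in cycle_edges c); last by rewrite mul0r mem_head.
rewrite mul1r inE; apply/orP; right; apply/mapP; exists (size c).-1; last by rewrite prednK // lt0n size_eq0.
by rewrite mem_iota /= -ltnS prednK ?lt0n ?size_eq0 // ltnS size_uniq_ord.
Qed.

Lemma inf_attained (R : realType) (A : set R) (m : R) : A m -> lbound A m -> inf A = m.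
Proof.
move=> Am mA; apply/le_anti; rewrite lb_le_inf ?andbT //; last by exists m.
by apply: ge_inf => //; exists m.
Qed.

Unset Implicit Arguments.
Theorem mainTheorem2 (R : realType) (n : nat) (E : {set 'I_n * 'I_n})
  (out_edge : forall u : 'I_n, exists v : 'I_n, (u, v) \in E)
  (has_cycle : exists c : seq 'I_n, dcycle E c)
  (i j : 'I_n) (hij : (i, j) \in E) (r : 'I_n * 'I_n -> R) :
  let f := fun x : R => min_cycle_mean E (replace_coord r (i, j) x) in
  continuous (f : R -> R) /\ piecewise_affine_at_most n f.
Proof.
move=> f; have [L LE] := finite_dcycles E.
pose P := map (cycle_line r (i, j)) L.
have P0 : P != [::].
  by have [c /LE cL] := has_cycle; rewrite -size_eq0 size_map size_eq0; apply: contraTneq cL => ->.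
have fE : f = envelope P.
  apply/funext => x; apply: inf_attained.
    have [_ /mapP[c cL ->] ->] := envelope_attained x P0.
    by exists c; [exact/LE | rewrite cycle_mean_replace].
  by move=> _ [c /LE cL <-]; rewrite cycle_mean_replace; apply/envelope_le/map_f.
rewrite fE; split; first exact: envelope_continuous.
set S := (0 : R) :: [seq (k.+1)%:R^-1 | k <- iota 0 n].
have [|B BS affB] := envelope_affine_off (undup_uniq S) P0.
  move=> _ /mapP[p /mapP[c /LE cE ->] ->]; by rewrite mem_undup; apply: dcycle_slope cE.
apply: piecewise_affine_at_most_of_affine_off affB.
by rewrite -ltnS (leq_trans BS) // (leq_trans (size_undup S)) //= size_map size_iota.
Qed.
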